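(* Let $d$ be a (possibly extended) $K$-quasi-metric on $X$ and let $o\in X$ be a point other than the point at infinity $\infty$ of $d$. Let $d_o$ be the involution of $d$ at $o$. Then $\dim_N(X,d)=\dim_N(X,d_o)$.
   Context: A $K$-quasi-metric ($K\ge1$) is a symmetric map $d:X\times X\to[0,\infty)$ with $d(x,y)=0\iff x=y$ and $d(x,y)\le K\max(d(x,z),d(z,y))$; an extended one has exactly one point $\infty\in X$ with $d(x,\infty)=\infty$ for $x\ne\infty$, all other distances finite. The involution at $o\ne\infty$: $d_o(x,x)=0$, $d_o(x,y)=\frac{d(x,y)}{d(x,o)d(o,y)}$ for distinct $x,y\ne\infty$, $d_o(\infty,y)=1/d(o,y)$, $d_o(x,\infty)=1/d(x,o)$ for distinct points, with $\lambda/0=\infty$ for $\lambda>0$ (so $o$ is the point at infinity of $d_o$). Nagata dimension of a (possibly extended) quasi-metric space $(X,\rho)$ with point at infinity $\infty$ (if any): diameters taken w.r.t. $\rho$. A cover $\mathcal B$ of $X\setminus\{\infty\}$ is $C$-bounded if each $B\in\mathcal B$ has $\mathrm{diam}(B)\le C$. A family $\mathcal B$ has $s$-multiplicity $\le m$ if every $U\subset X$ with $\mathrm{diam}(U)\le s$ meets at most $m$ members of $\mathcal B$. $\dim_N(X,\rho)$ is the infimum of all $n$ for which there is $c>0$ such that for every $s>0$ there is a $cs$-bounded cover of $X\setminus\{\infty\}$ with $s$-multiplicity $\le n+1$. *)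

From Stdlib Require Import Reals List Classical ClassicalEpsilon.
From Coquelicot Require Import Coquelicot.
Open Scope R_scope.

Definition dec (P : Prop) : bool :=
  if excluded_middle_informative P then true else false.

Definition rbar_max (a b : Rbar) : Rbar := if dec (Rbar_le a b) then b else a.

(* A (possibly extended) K-quasi-metric on X.  [pinf = Some i] means the
   space is extended with point at infinity i; [pinf = None] means ordinary. *)
Definition is_quasi_metric {X : Type} (K : R) (d : X -> X -> Rbar)
  (pinf : option X) : Prop :=
  1 <= K /\
  (forall x y, Rbar_le (Finite 0) (d x y)) /\
  (forall x y, d x y = d y x) /\
  (forall x y, d x y = Finite 0 <-> x = y) /\
  (forall x y z, Rbar_le (d x y) (Rbar_mult (Finite K) (rbar_max (d x z) (d z y)))) /\
  (forall x y, d x y = p_infty <->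
      (exists i, pinf = Some i /\ x <> y /\ (x = i \/ y = i))).

Definition qdiv (a b : R) : Rbar :=
  if Req_EM_T b 0 then p_infty else Finite (a / b).

(* involution of d at o; its point at infinity is o *)
Definition involution {X : Type} (d : X -> X -> Rbar) (pinf : option X) (o : X)
  (x y : X) : Rbar :=
  if dec (x = y) then Finite 0
  else if dec (pinf = Some x) then qdiv 1 (real (d o y))
  else if dec (pinf = Some y) then qdiv 1 (real (d x o))
  else qdiv (real (d x y)) (real (d x o) * real (d o y)).

Definition diam_le {X : Type} (rho : X -> X -> Rbar) (U : X -> Prop) (C : R) : Prop :=
  forall x y, U x -> U y -> Rbar_le (rho x y) (Finite C).

Definition at_most {X : Type} (m : nat) (P : (X -> Prop) -> Prop) : Prop :=
  forall l : list (X -> Prop), NoDup l -> (forall b, In b l -> P b) ->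
    (length l <= m)%nat.

Definition bounded_cover {X : Type} (rho : X -> X -> Rbar) (pinf : option X)
  (C : R) (B : (X -> Prop) -> Prop) : Prop :=
  (forall b, B b -> (forall x, b x -> pinf <> Some x) /\ diam_le rho b C) /\
  (forall x, pinf <> Some x -> exists b, B b /\ b x).

Definition multiplicity_le {X : Type} (rho : X -> X -> Rbar)
  (B : (X -> Prop) -> Prop) (s : R) (m : nat) : Prop :=
  forall U : X -> Prop, diam_le rho U s ->
    at_most m (fun b => B b /\ exists x, b x /\ U x).

Definition nagata_admissible {X : Type} (rho : X -> X -> Rbar) (pinf : option X)
  (n : nat) : Prop :=
  exists c, 0 < c /\ forall s, 0 < s ->
    exists B, bounded_cover rho pinf (c * s) B /\ multiplicity_le rho B s (S n).

Definition nagata_dim {X : Type} (rho : X -> X -> Rbar) (pinf : option X) : Rbar :=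
  Glb_Rbar (fun r => exists n : nat, r = INR n /\ nagata_admissible rho pinf n).

From Stdlib Require Import Reals List Classical ClassicalEpsilon.
From Coquelicot Require Import Coquelicot.
From Stdlib Require Import Lra Lia.
Open Scope R_scope.

(* Write n x = d(x,o).  Away from o and the point at infinity, d_o(x,y) = d(x,y) / (n x n y),
   the point at infinity of d lies at d_o-distance 1 / n x from x, and d is recovered from d_o
   in the same way with weight 1 / n.  Both inequalities therefore follow from one transfer
   statement: if sigma is such a rescaling of rho, Nagata covers of rho give Nagata covers of
   sigma of the same multiplicity m+1.  Cut the space into the annuli R0 mu^(k+1) <= n < R0 mu^k,
   mu = 1 / (2K), and the heavy region n >= R0.  On one annulus sigma is rho rescaled by about
   (R0 mu^k)^-2, so a rho-cover at the matching scale, cut along the annulus, is a good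
   sigma-cover, while annuli two apart are sigma-far from each other.  The even annuli thus
   give a family of multiplicity m+1 at a scale s, the odd annuli with the (sigma-small) heavy
   region one at a much larger scale s'; absorbing every small set that is s-close to a large
   set into it merges them into a single s-cover of multiplicity m+1. *)

Lemma dec_true (P : Prop) : P -> dec P = true.
Proof. intros H. unfold dec. destruct (excluded_middle_informative P); tauto. Qed.

Lemma dec_false (P : Prop) : ~ P -> dec P = false.
Proof. intros H. unfold dec. destruct (excluded_middle_informative P); tauto. Qed.

Lemma Rbar_le_weaken (x : Rbar) (a b : R) :
  Rbar_le x (Finite a) -> a <= b -> Rbar_le x (Finite b).
Proof. destruct x; simpl; intros; try lra; auto. Qed.

Lemma Rbar_le_Finite_nonneg (x : Rbar) (a : R) :
  Rbar_le (Finite 0) x -> Rbar_le x (Finite a) -> 0 <= a.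
Proof. destruct x; simpl; intros; try contradiction; lra. Qed.

Lemma diam_le_mono {X : Type} (rho : X -> X -> Rbar) (U : X -> Prop) (C C' : R) :
  C <= C' -> diam_le rho U C -> diam_le rho U C'.
Proof. intros HC HU x y Hx Hy. apply Rbar_le_weaken with C; auto. Qed.

Definition quasi_triangle {X : Type} (t : X -> X -> Rbar) (K : R) : Prop :=
  forall x y z a, Rbar_le (t x z) (Finite a) -> Rbar_le (t z y) (Finite a) ->
    Rbar_le (t x y) (Finite (K * a)).

Section AtMost.

Context {X : Type}.

Lemma at_most_mono (m : nat) (P Q : (X -> Prop) -> Prop) :
  (forall b, Q b -> P b) -> at_most m P -> at_most m Q.
Proof. intros HQP HP l Hnd Hl. apply HP; auto. Qed.

Lemma at_most_le (m m' : nat) (P : (X -> Prop) -> Prop) :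
  (m <= m')%nat -> at_most m P -> at_most m' P.
Proof. intros Hm HP l Hnd Hl. specialize (HP l Hnd Hl). lia. Qed.

Lemma at_most_one_eq (A : X -> Prop) : at_most 1 (fun b => b = A).
Proof.
  intros [|b [|b' l]] Hnd Hl; simpl; try lia.
  inversion_clear Hnd as [|? ? Hnin _]. exfalso. apply Hnin. left.
  rewrite (Hl b' (or_intror (or_introl eq_refl))), (Hl b (or_introl eq_refl)).
  reflexivity.
Qed.

Lemma at_most_image {Y : Type} (f : (Y -> Prop) -> (X -> Prop)) (P : (Y -> Prop) -> Prop)
  (m : nat) : at_most m P -> at_most m (fun b => exists a, P a /\ b = f a).
Proof.
  intros HP l Hnd Hl.
  assert (Hpre : exists l', l = map f l' /\ forall a, In a l' -> P a).
  { clear Hnd. induction l as [|b l IH].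
    - exists nil. split; [reflexivity | intros a []].
    - destruct IH as [l' [-> Hl']]; [intros b' Hb'; apply Hl; right; exact Hb'|].
      destruct (Hl b (or_introl eq_refl)) as [a [Pa ->]].
      exists (a :: l'). split; [reflexivity|]. intros a' [<-|Ha']; auto. }
  destruct Hpre as [l' [-> Hl']]. rewrite length_map.
  apply HP; auto. eapply NoDup_map_inv; eauto.
Qed.

End AtMost.

Lemma bounded_cover_mono {X : Type} (rho : X -> X -> Rbar) (pinf : option X)
  (C C' : R) (B : (X -> Prop) -> Prop) :
  C <= C' -> bounded_cover rho pinf C B -> bounded_cover rho pinf C' B.
Proof.
  intros HC [Hbd Hcov]. split; auto. intros b Hb. destruct (Hbd b Hb) as [Hfin Hdiam].
  split; auto. apply diam_le_mono with C; auto.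
Qed.

Lemma multiplicity_add_isolated {X : Type} (rho : X -> X -> Rbar)
  (B : (X -> Prop) -> Prop) (A : X -> Prop) (s : R) (m : nat) :
  multiplicity_le rho B s (S m) ->
  (forall U, diam_le rho U s -> (exists x, A x /\ U x) ->
     forall b, B b -> ~ exists x, b x /\ U x) ->
  multiplicity_le rho (fun b => B b \/ b = A) s (S m).
Proof.
  intros HB Hiso U HU. destruct (classic (exists x, A x /\ U x)) as [HA|HA].
  - apply at_most_le with 1%nat; [lia|].
    apply at_most_mono with (fun b => b = A); [|apply at_most_one_eq].
    intros b [[Hb| ->] Hbu]; [|reflexivity]. exfalso. exact (Hiso U HU HA b Hb Hbu).
  - apply at_most_mono with (fun b => B b /\ exists x, b x /\ U x); [|apply HB; exact HU].
    intros b [[Hb| ->] Hbu]; [split; auto | contradiction].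
Qed.

(** * Merging a fine and a coarse family *)

Section Merging.

Context {Z : Type} {t : Z -> Z -> Rbar} {K : R}.
Hypothesis K_ge1 : 1 <= K.
Hypothesis t_sym : forall x y, t x y = t y x.
Hypothesis t_qt : quasi_triangle t K.

Variables (s s' c : R) (m : nat) (Dfam Cfam : (Z -> Prop) -> Prop).
Hypothesis s_pos : 0 < s.
Hypothesis c_ge1 : 1 <= c.
Hypothesis scales : K * (K * (K * (c * s))) <= s'.
Hypothesis Dfam_diam : forall D, Dfam D -> diam_le t D (c * s).
Hypothesis Cfam_diam : forall C, Cfam C -> diam_le t C (c * s').
Hypothesis Dfam_mult : multiplicity_le t Dfam s m.
Hypothesis Cfam_mult : multiplicity_le t Cfam s' m.

Definition absorbs (D C : Z -> Prop) : Prop :=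
  Cfam C /\ exists p b, D p /\ C b /\ Rbar_le (t p b) (Finite s).

Definition absorbed (D : Z -> Prop) : Prop := exists C, absorbs D C.

Definition absorber (D : Z -> Prop) : Z -> Prop :=
  epsilon (inhabits (fun _ : Z => False)) (absorbs D).

Lemma absorber_spec (D : Z -> Prop) : absorbed D -> absorbs D (absorber D).
Proof. apply epsilon_spec. Qed.

Definition enlarged (C : Z -> Prop) (x : Z) : Prop :=
  C x \/ exists D, Dfam D /\ absorbed D /\ absorber D = C /\ D x.

Definition merged (M : Z -> Prop) : Prop :=
  (exists C, Cfam C /\ M = enlarged C) \/ (exists D, Dfam D /\ ~ absorbed D /\ M = D).

Definition merge_of (D : Z -> Prop) : Z -> Prop :=
  if dec (absorbed D) then enlarged (absorber D) else D.

Lemma scale_chain :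
  0 <= c * s /\ s <= c * s /\ c * s <= K * (c * s) /\ K * (c * s) <= K * (K * (c * s)) /\
  K * (K * (c * s)) <= s' /\ s' <= c * s' /\ c * s' <= K * (c * s') /\
  K * (c * s') <= K * (K * (c * s')) /\ K * (K * (c * s')) <= K * (K * (K * (c * s'))).
Proof.
  assert (Hgrow : forall x, 0 <= x -> x <= K * x) by (intros; nra).
  assert (0 <= c * s) by nra. pose proof (Hgrow (c * s)). pose proof (Hgrow (K * (c * s))).
  assert (0 <= s') by nra. pose proof (Hgrow (c * s')). pose proof (Hgrow (K * (c * s'))).
  repeat split; nra.
Qed.

Lemma absorbed_close (D : Z -> Prop) (x y : Z) :
  Dfam D -> absorbed D -> D x -> absorber D y ->
  Rbar_le (t x y) (Finite (K * (K * (c * s')))).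
Proof.
  intros HD Ha Dx Cy. pose proof scale_chain as Hchain; decompose [and] Hchain.
  destruct (absorber_spec D Ha) as [HC [p [b [Dp [Cb Hpb]]]]].
  apply (t_qt _ _ b).
  - apply (t_qt _ _ p).
    + apply Rbar_le_weaken with (c * s); [apply (Dfam_diam D); auto | lra].
    + apply Rbar_le_weaken with s; [auto | lra].
  - apply Rbar_le_weaken with (c * s'); [apply (Cfam_diam _ HC); auto | lra].
Qed.

Lemma merged_diam (M : Z -> Prop) :
  merged M -> diam_le t M (K * (K * (K * (c * s')))).
Proof.
  pose proof scale_chain as Hchain; decompose [and] Hchain.
  intros [[C [HC ->]] | [D [HD [_ ->]]]]; intros x y Hx Hy.
  2: { apply Rbar_le_weaken with (c * s); [apply (Dfam_diam D); auto | lra]. }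
  destruct Hx as [Cx | [D [HD [Ha [<- Dx]]]]]; destruct Hy as [Cy | [D' [HD' [Ha' [E' Dy]]]]].
  - apply Rbar_le_weaken with (c * s'); [apply (Cfam_diam C); auto | lra].
  - rewrite t_sym. apply Rbar_le_weaken with (K * (K * (c * s'))); [|lra].
    apply (absorbed_close D'); auto. rewrite E'; exact Cx.
  - apply Rbar_le_weaken with (K * (K * (c * s'))); [apply absorbed_close with D; auto | lra].
  - destruct (absorber_spec D Ha) as [_ [p [b [_ [Cb _]]]]].
    apply (t_qt _ _ b).
    + apply Rbar_le_weaken with (K * (K * (c * s'))); [apply absorbed_close with D; auto | lra].
    + rewrite t_sym. apply Rbar_le_weaken with (K * (K * (c * s'))); [|lra].
      apply (absorbed_close D'); auto. rewrite E'; exact Cb.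
Qed.

Lemma merged_mult_unabsorbed (U : Z -> Prop) (D0 : Z -> Prop) (q : Z) :
  diam_le t U s -> Dfam D0 -> ~ absorbed D0 -> D0 q -> U q ->
  at_most m (fun M => merged M /\ exists x, M x /\ U x).
Proof.
  intros HU HD0 Hna0 D0q Uq.
  apply at_most_mono with (fun M => exists D, (Dfam D /\ exists x, D x /\ U x) /\ M = merge_of D);
    [|apply at_most_image, Dfam_mult, HU].
  intros M [[[C [HC ->]] | [D [HD [Hna ->]]]] [u [Mu Uu]]].
  - destruct Mu as [Cu | [D [HD [Ha [<- Du]]]]].
    + exfalso. apply Hna0. exists C. split; auto. exists q, u. auto.
    + exists D. split; [split; eauto|]. unfold merge_of. rewrite (dec_true _ Ha). reflexivity.
  - exists D. split; [split; eauto|]. unfold merge_of. rewrite (dec_false _ Hna). reflexivity.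
Qed.

Definition absorbing_hull (U : Z -> Prop) (z : Z) : Prop :=
  U z \/ exists D p, Dfam D /\ (exists u, U u /\ D u) /\ D p /\
    absorber D z /\ Rbar_le (t p z) (Finite s).

Lemma absorbing_hull_diam (U : Z -> Prop) :
  diam_le t U s -> diam_le t (absorbing_hull U) s'.
Proof.
  intros HU. pose proof scale_chain as Hchain; decompose [and] Hchain.
  assert (Hnear : forall z u', absorbing_hull U z -> U u' ->
            Rbar_le (t u' z) (Finite (K * (K * (c * s))))).
  { intros z u' [Uz | [D [p [HD [[u [Uu Du]] [Dp [_ Hpz]]]]]]] Uu'.
    - apply Rbar_le_weaken with s; [apply HU; auto | lra].
    - apply (t_qt _ _ p).
      + apply Rbar_le_weaken with (K * (c * s)); [|lra]. apply (t_qt _ _ u).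
        * apply Rbar_le_weaken with s; [apply HU; auto | lra].
        * apply (Dfam_diam D); auto.
      + apply Rbar_le_weaken with s; [auto | lra]. }
  intros x y Hx Hy.
  assert (Hne : exists u, U u).
  { destruct Hx as [Ux | [D [p [_ [[u [Uu _]] _]]]]]; eauto. }
  destruct Hne as [u Uu].
  apply Rbar_le_weaken with (K * (K * (K * (c * s)))); [|exact scales].
  apply (t_qt _ _ u); [rewrite t_sym|]; apply Hnear; auto.
Qed.

Lemma merged_mult_absorbed (U : Z -> Prop) :
  diam_le t U s -> ~ (exists D q, Dfam D /\ ~ absorbed D /\ D q /\ U q) ->
  at_most m (fun M => merged M /\ exists x, M x /\ U x).
Proof.
  intros HU Hall.
  apply at_most_mono
    with (fun M => exists C, (Cfam C /\ exists x, C x /\ absorbing_hull U x) /\ M = enlarged C);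
    [|apply at_most_image, Cfam_mult, absorbing_hull_diam, HU].
  intros M [[[C [HC ->]] | [D [HD [Hna ->]]]] [u [Mu Uu]]].
  - exists C. split; [split; auto|reflexivity].
    destruct Mu as [Cu | [D [HD [Ha [<- Du]]]]].
    + exists u. split; [|left]; auto.
    + destruct (absorber_spec D Ha) as [_ [p [b [Dp [Cb Hpb]]]]].
      exists b. split; auto. right. exists D, p. repeat split; eauto.
  - exfalso. apply Hall. exists D, u. auto.
Qed.

Lemma merged_multiplicity : multiplicity_le t merged s m.
Proof.
  intros U HU.
  destruct (classic (exists D q, Dfam D /\ ~ absorbed D /\ D q /\ U q))
    as [[D [q [HD [Hna [Dq Uq]]]]] | Hall].
  - exact (merged_mult_unabsorbed U D q HU HD Hna Dq Uq).
  - exact (merged_mult_absorbed U HU Hall).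
Qed.

Lemma merge_families (pinf : option Z) (A B : Z -> Prop) :
  (forall x, pinf <> Some x -> A x \/ B x) ->
  (forall D, Dfam D -> forall x, D x -> pinf <> Some x) ->
  (forall C, Cfam C -> forall x, C x -> pinf <> Some x) ->
  (forall x, A x -> exists D, Dfam D /\ D x) ->
  (forall x, B x -> exists C, Cfam C /\ C x) ->
  exists N, bounded_cover t pinf (K * (K * (K * (c * s')))) N /\ multiplicity_le t N s m.
Proof.
  intros HAB HDfin HCfin HDcov HCcov. exists merged. split; [split|apply merged_multiplicity].
  - intros M HM. split; [|apply merged_diam; exact HM].
    destruct HM as [[C [HC ->]] | [D [HD [_ ->]]]].
    + intros x [Cx | [D [HD [_ [_ Dx]]]]]; [apply (HCfin C) | apply (HDfin D)]; auto.
    + apply HDfin; exact HD.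
  - intros x Hx. destruct (HAB x Hx) as [HA|HB].
    + destruct (HDcov x HA) as [D [HD Dx]].
      destruct (classic (absorbed D)) as [Ha|Hna].
      * exists (enlarged (absorber D)). split; [|right; exists D; auto].
        left. exists (absorber D). split; auto. apply absorber_spec; exact Ha.
      * exists D. split; auto. right. exists D; auto.
    + destruct (HCcov x HB) as [C [HC Cx]].
      exists (enlarged C). split; [left; exists C; auto | left; exact Cx].
Qed.

End Merging.

(** * Rescaling by a weight *)

Lemma pow_le_pow_contravar (x : R) (k j : nat) : 0 <= x <= 1 -> (k <= j)%nat -> x ^ j <= x ^ k.
Proof.
  intros Hx Hkj. replace j with (k + (j - k))%nat by lia. rewrite pow_add.
  assert (0 <= x ^ k) by (apply pow_le; lra).
  assert (x ^ (j - k) <= 1) by (rewrite <- (pow1 (j - k)); apply pow_incr; lra).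
  assert (0 <= x ^ (j - k)) by (apply pow_le; lra). nra.
Qed.

Lemma geometric_annulus (v R0 mu : R) : 0 < v -> 0 < R0 -> 0 < mu < 1 ->
  R0 <= v \/ exists k, R0 * mu ^ S k <= v /\ v < R0 * mu ^ k.
Proof.
  intros Hv HR Hmu.
  destruct (pow_lt_1_zero mu) with (y := v / R0) as [N HN].
  { rewrite Rabs_right; lra. }
  { apply Rdiv_lt_0_compat; lra. }
  assert (HN' : R0 * mu ^ N <= v).
  { specialize (HN N (le_n N)). rewrite Rabs_right in HN by (apply Rle_ge, pow_le; lra).
    apply Rlt_le. apply (Rmult_lt_compat_l R0) in HN; [|lra].
    replace (R0 * (v / R0)) with v in HN by (field; lra). exact HN. }
  clear HN. induction N as [|N IH].
  - left. simpl in HN'. lra.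
  - destruct (Rle_lt_dec (R0 * mu ^ N) v) as [H|H]; [apply IH; exact H|].
    right. exists N. split; auto.
Qed.

Lemma admissible_cover_choice {X : Type} (rho : X -> X -> Rbar) (Q : option X) (m : nat) :
  nagata_admissible rho Q m ->
  exists c cover, 0 < c /\ forall s, 0 < s ->
    bounded_cover rho Q (c * s) (cover s) /\ multiplicity_le rho (cover s) s (S m).
Proof.
  intros [c [Hc Hadm]].
  destruct (choice (fun s B =>
    0 < s -> bounded_cover rho Q (c * s) B /\ multiplicity_le rho B s (S m))) as [cover Hcover].
  { intros s. destruct (Rlt_dec 0 s) as [Hs|Hs].
    - destruct (Hadm s Hs) as [B HB]. exists B. auto.
    - exists (fun _ => False). intros; lra. }
  exists c, cover. auto.
Qed.

Local Set Implicit Arguments.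

(* [sigma] is [rho] after the conformal change of weight [n]: on the points
   finite for both, sigma(x,y) = rho(x,y) / (n x * n y); the point at infinity
   [Q1] of [rho] lies at sigma-distance 1 / n x from x; and [n] behaves like the
   rho-distance to the point [Q2] that becomes the point at infinity of [sigma]. *)
Record is_inversion {X : Type} (rho sigma : X -> X -> Rbar) (Q1 Q2 : option X)
  (n : X -> R) (K K2 : R) : Prop := {
  iv_K_ge1 : 1 <= K;
  iv_K2_ge1 : 1 <= K2;
  iv_sym : forall x y, sigma x y = sigma y x;
  iv_diag : forall x, sigma x x = Finite 0;
  iv_qt : quasi_triangle sigma K2;
  iv_weight_pos : forall x, Q1 <> Some x -> Q2 <> Some x -> 0 < n x;
  iv_scale : forall x y, Q1 <> Some x -> Q2 <> Some x -> Q1 <> Some y -> Q2 <> Some y ->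
    forall a, Rbar_le (sigma x y) (Finite a) <-> Rbar_le (rho x y) (Finite (a * n x * n y));
  iv_at_pinf : forall q x, Q1 = Some q -> Q1 <> Some x -> Q2 <> Some x ->
    forall a, Rbar_le (sigma x q) (Finite a) <-> / n x <= a;
  iv_rho_le_weight : forall x y, Q1 <> Some x -> Q2 <> Some x -> Q1 <> Some y -> Q2 <> Some y ->
    Rbar_le (rho x y) (Finite (K * Rmax (n x) (n y)));
  iv_weight_le : forall x y, Q1 <> Some x -> Q2 <> Some x -> Q1 <> Some y -> Q2 <> Some y ->
    forall a, Rbar_le (rho x y) (Finite a) -> n x <= K * Rmax a (n y)
}.

Local Unset Implicit Arguments.

Section Annuli.

Context {X : Type} {rho sigma : X -> X -> Rbar} {Q1 Q2 : option X} {n : X -> R} {K K2 : R}.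
Hypothesis inv : is_inversion rho sigma Q1 Q2 n K K2.

Let K_ge1 := iv_K_ge1 inv.
Let mu := / (2 * K).

Lemma mu_bounds : 0 < mu /\ mu < 1 /\ K * mu = / 2.
Proof.
  unfold mu. pose proof K_ge1. repeat split.
  - apply Rinv_0_lt_compat; lra.
  - rewrite <- Rinv_1. apply Rinv_lt_contravar; lra.
  - field; lra.
Qed.

Definition annulus (R0 : R) (k : nat) (x : X) : Prop :=
  Q1 <> Some x /\ Q2 <> Some x /\ R0 * mu ^ S k <= n x /\ n x < R0 * mu ^ k.

Definition heavy (R0 : R) (x : X) : Prop :=
  Q2 <> Some x /\ (Q1 = Some x \/ (Q1 <> Some x /\ R0 <= n x)).

Lemma heavy_or_annulus (R0 : R) (x : X) : 0 < R0 -> Q2 <> Some x ->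
  heavy R0 x \/ exists k, annulus R0 k x.
Proof.
  intros HR hx2. destruct (classic (Q1 = Some x)) as [E|hx1]; [left; split; auto|].
  pose proof mu_bounds as [Hmu0 [Hmu1 _]].
  destruct (geometric_annulus (n x) R0 mu) as [Hh | [k Hk]]; auto.
  - apply (iv_weight_pos inv); auto.
  - left. split; auto.
  - right. exists k. repeat split; tauto.
Qed.

Lemma heavy_or_parity_annulus (R0 : R) (x : X) : 0 < R0 -> Q2 <> Some x ->
  (exists i, annulus R0 (2 * i + 0) x) \/ heavy R0 x \/ (exists i, annulus R0 (2 * i + 1) x).
Proof.
  intros HR hx. destruct (heavy_or_annulus R0 x HR hx) as [Hh | [k Hk]]; [tauto|].
  destruct (Nat.Even_or_Odd k) as [[i ->] | [i ->]].
  - left. exists i. rewrite Nat.add_0_r. exact Hk.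
  - right; right. exists i. exact Hk.
Qed.

Lemma weight_gap_separates (u v : X) (t R0 : R) :
  Q1 <> Some u -> Q2 <> Some u -> Q1 <> Some v -> Q2 <> Some v ->
  K * n v < n u -> n v < R0 -> 0 < t -> K * t * R0 <= 1 ->
  ~ Rbar_le (sigma u v) (Finite t).
Proof.
  intros hu1 hu2 hv1 hv2 Hgap HvR Ht HKtR Hs. pose proof K_ge1.
  pose proof (iv_weight_pos inv hu1 hu2). pose proof (iv_weight_pos inv hv1 hv2).
  apply (iv_scale inv hu1 hu2 hv1 hv2) in Hs.
  pose proof (iv_weight_le inv hu1 hu2 hv1 hv2 _ Hs) as Hw.
  unfold Rmax in Hw. destruct (Rle_dec (t * n u * n v) (n v)); [lra|].
  assert (1 <= K * t * n v) by (apply Rmult_le_reg_l with (n u); nra). nra.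
Qed.

Lemma annuli_separated (u v : X) (t R0 : R) (k j : nat) :
  (k + 2 <= j)%nat -> annulus R0 k u -> annulus R0 j v ->
  0 < t -> 0 < R0 -> K * t * R0 <= 1 -> ~ Rbar_le (sigma u v) (Finite t).
Proof.
  intros Hkj [hu1 [hu2 [Hu _]]] [hv1 [hv2 [_ Hv]]] Ht HR HKtR.
  pose proof mu_bounds as [Hmu0 [Hmu1 HKmu]].
  assert (mu ^ j <= mu * mu ^ S k) by (apply (pow_le_pow_contravar mu (S (S k))); lra || lia).
  assert (mu ^ j <= mu ^ 0) by (apply pow_le_pow_contravar; lra || lia).
  pose proof (iv_weight_pos inv hv1 hv2).
  apply (weight_gap_separates u v t R0); auto; nra.
Qed.

Lemma heavy_annulus_separated (u v : X) (t R0 : R) (k : nat) :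
  (1 <= k)%nat -> heavy R0 u -> annulus R0 k v ->
  0 < t -> 0 < R0 -> K * t * R0 <= 1 -> ~ Rbar_le (sigma u v) (Finite t).
Proof.
  intros Hk [hu2 Hu] [hv1 [hv2 [_ Hv]]] Ht HR HKtR Hs. pose proof K_ge1.
  pose proof mu_bounds as [Hmu0 [Hmu1 HKmu]].
  assert (mu ^ k <= mu ^ 1) by (apply pow_le_pow_contravar; lra || lia). simpl in *.
  pose proof (iv_weight_pos inv hv1 hv2).
  destruct Hu as [Eu | [hu1 HRu]].
  - rewrite (iv_sym inv) in Hs. apply (iv_at_pinf inv Eu hv1 hv2) in Hs.
    assert (1 <= t * n v).
    { apply Rmult_le_compat_r with (r := n v) in Hs; [|lra].
      rewrite Rinv_l in Hs; lra. }
    assert (n v < R0) by nra.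
    assert (t * n v < t * R0) by (apply Rmult_lt_compat_l; lra). nra.
  - revert Hs. apply (weight_gap_separates u v t R0); auto; nra.
Qed.

Lemma heavy_diam (R0 : R) : 0 < R0 -> diam_le sigma (heavy R0) (K / R0).
Proof.
  intros HR x y [hx Hx] [hy Hy]. pose proof K_ge1.
  assert (HiR : 0 < / R0) by (apply Rinv_0_lt_compat; lra).
  destruct Hx as [Ex | [hx1 Rx]]; destruct Hy as [Ey | [hy1 Ry]].
  - rewrite Ex in Ey. injection Ey as <-. rewrite (iv_diag inv). simpl.
    apply Rlt_le, Rdiv_lt_0_compat; lra.
  - rewrite (iv_sym inv). apply (iv_at_pinf inv Ex hy1 hy).
    assert (/ n y <= / R0) by (apply Rinv_le_contravar; lra). unfold Rdiv. nra.
  - apply (iv_at_pinf inv Ey hx1 hx).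
    assert (/ n x <= / R0) by (apply Rinv_le_contravar; lra). unfold Rdiv. nra.
  - apply (iv_scale inv hx1 hx hy1 hy).
    apply Rbar_le_weaken with (K * Rmax (n x) (n y)); [apply (iv_rho_le_weight inv); auto|].
    replace (K / R0 * n x * n y) with (K * (n x * n y / R0)) by (field; lra).
    apply Rmult_le_compat_l; [lra|]. apply Rmax_lub;
      apply Rmult_le_reg_r with R0; auto; unfold Rdiv; rewrite Rmult_assoc, Rinv_l; nra.
Qed.

Section Covers.

Variables (c : R) (m : nat) (cover : R -> (X -> Prop) -> Prop).
Hypothesis c_pos : 0 < c.
Hypothesis cover_spec : forall s, 0 < s ->
  bounded_cover rho Q1 (c * s) (cover s) /\ multiplicity_le rho (cover s) s (S m).

(* On the annulus of radius r = R0 mu^k, sigma is about rho / r^2: hence the scale t r^2. *)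
Definition annulus_family (R0 t : R) (p : nat) (M : X -> Prop) : Prop :=
  exists i b, cover (t * (R0 * mu ^ (2 * i + p)) ^ 2) b /\
    M = (fun x => b x /\ annulus R0 (2 * i + p) x).

Lemma annulus_family_bounded (R0 t : R) (p : nat) (M : X -> Prop) :
  0 < t -> 0 < R0 -> annulus_family R0 t p M ->
  diam_le sigma M (c * (2 * K) ^ 2 * t).
Proof.
  intros Ht HR [i [b [Hb ->]]]. pose proof K_ge1.
  pose proof mu_bounds as [Hmu0 [_ HKmu]].
  set (r := R0 * mu ^ (2 * i + p)).
  assert (Hr : 0 < r) by (apply Rmult_lt_0_compat; [lra|apply pow_lt; lra]).
  destruct (cover_spec (t * r ^ 2)) as [[Hbd _] _];
    [apply Rmult_lt_0_compat; [lra | apply pow_lt; lra]|].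
  intros x y [bx [hx1 [hx2 [Hx _]]]] [by' [hy1 [hy2 [Hy _]]]].
  apply (iv_scale inv hx1 hx2 hy1 hy2).
  apply Rbar_le_weaken with (c * (t * r ^ 2)); [apply (Hbd b Hb); auto|].
  replace (R0 * mu ^ S (2 * i + p)) with (mu * r) in Hx, Hy by (unfold r; simpl; ring).
  assert (r <= 2 * K * n x) by nra. assert (r <= 2 * K * n y) by nra.
  assert (r * r <= (2 * K * n x) * (2 * K * n y)) by (apply Rmult_le_compat; nra).
  assert (0 <= c * t) by nra.
  replace (c * (2 * K) ^ 2 * t * n x * n y)
    with ((c * t) * ((2 * K * n x) * (2 * K * n y))) by ring.
  replace (c * (t * r ^ 2)) with ((c * t) * (r * r)) by ring.
  apply Rmult_le_compat_l; lra.
Qed.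

Lemma annulus_family_covers (R0 t : R) (i p : nat) (x : X) :
  0 < t -> 0 < R0 -> annulus R0 (2 * i + p) x ->
  exists M, annulus_family R0 t p M /\ M x.
Proof.
  intros Ht HR Hx. pose proof mu_bounds as [Hmu0 _].
  destruct (cover_spec (t * (R0 * mu ^ (2 * i + p)) ^ 2)) as [[_ Hcov] _].
  { apply Rmult_lt_0_compat; [lra|]. apply pow_lt, Rmult_lt_0_compat; [lra|apply pow_lt; lra]. }
  destruct (Hcov x (proj1 Hx)) as [b [Hb bx]].
  exists (fun y => b y /\ annulus R0 (2 * i + p) y). split; [exists i, b; auto | auto].
Qed.

Lemma annulus_family_multiplicity (R0 t : R) (p : nat) :
  0 < t -> 0 < R0 -> K * t * R0 <= 1 ->
  multiplicity_le sigma (annulus_family R0 t p) t (S m).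
Proof.
  intros Ht HR HKtR U HU l Hnd Hl.
  destruct l as [|M0 l0]; [simpl; lia|].
  destruct (Hl M0 (or_introl eq_refl)) as [[i0 [b0 [_ ->]]] [u0 [[_ Au0] Uu0]]].
  pose proof mu_bounds as [Hmu0 _].
  set (k0 := (2 * i0 + p)%nat) in *. set (r0 := R0 * mu ^ k0) in *.
  assert (Hr : 0 < r0) by (apply Rmult_lt_0_compat; [lra|apply pow_lt; lra]).
  set (U' := fun x => U x /\ annulus R0 k0 x).
  assert (HU' : diam_le rho U' (t * r0 ^ 2)).
  { intros x y [Ux [hx1 [hx2 [_ Hx]]]] [Uy [hy1 [hy2 [_ Hy]]]].
    change (R0 * mu ^ k0) with r0 in Hx, Hy.
    pose proof (iv_weight_pos inv hx1 hx2). pose proof (iv_weight_pos inv hy1 hy2).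
    apply Rbar_le_weaken with (t * n x * n y).
    - apply (iv_scale inv hx1 hx2 hy1 hy2). apply HU; auto.
    - assert (n x * n y <= r0 * r0) by (apply Rmult_le_compat; lra). simpl. nra. }
  revert Hnd Hl. apply at_most_mono
    with (fun M => exists b, (cover (t * r0 ^ 2) b /\ exists x, b x /\ U' x) /\
                             M = (fun x => b x /\ annulus R0 k0 x)).
  - intros M [[i [b [Hb ->]]] [v [[bv Av] Uv]]].
    assert (Hi : i = i0).
    { destruct (Nat.lt_total i i0) as [Hlt|[Heq|Hgt]]; auto; exfalso.
      - refine (annuli_separated v u0 t R0 (2 * i + p) k0 _ Av Au0 Ht HR HKtR (HU _ _ Uv Uu0)).
        unfold k0; lia.
      - refine (annuli_separated u0 v t R0 k0 (2 * i + p) _ Au0 Av Ht HR HKtR (HU _ _ Uu0 Uv)).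
        unfold k0; lia. }
    subst i. exists b. split; [split; [exact Hb | exists v; split; [|split]; auto] | reflexivity].
  - apply at_most_image, cover_spec; [|exact HU'].
    apply Rmult_lt_0_compat; [lra | apply pow_lt; lra].
Qed.

Definition odd_family (R0 t : R) (M : X -> Prop) : Prop :=
  annulus_family R0 t 1 M \/ M = heavy R0.

Lemma odd_family_multiplicity (R0 t : R) :
  0 < t -> 0 < R0 -> K * t * R0 <= 1 -> multiplicity_le sigma (odd_family R0 t) t (S m).
Proof.
  intros Ht HR HKtR. apply multiplicity_add_isolated.
  - apply annulus_family_multiplicity; auto.
  - intros U HU [u [Hu Uu]] M [i [b [_ ->]]] [v [[_ Hv] Uv]].
    refine (heavy_annulus_separated u v t R0 (2 * i + 1) _ Hu Hv Ht HR HKtR (HU _ _ Uu Uv)).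
    lia.
Qed.

Lemma two_scale_cover (c0 s s' : R) :
  c * (2 * K) ^ 2 <= c0 -> K * K <= c0 -> 0 < s -> K2 * (K2 * (K2 * (c0 * s))) <= s' ->
  exists N, bounded_cover sigma Q2 (K2 * (K2 * (K2 * (c0 * s')))) N /\
            multiplicity_le sigma N s (S m).
Proof.
  intros Hc0a Hc0b Hs Hscales. pose proof K_ge1. pose proof (iv_K2_ge1 inv).
  assert (Hc0 : 1 <= c0) by nra.
  assert (Hss' : s <= s').
  { assert (s <= c0 * s) by nra. assert (c0 * s <= K2 * (c0 * s)) by nra.
    assert (K2 * (c0 * s) <= K2 * (K2 * (c0 * s))) by nra.
    assert (K2 * (K2 * (c0 * s)) <= K2 * (K2 * (K2 * (c0 * s)))) by nra. lra. }
  set (R0 := / (K * s')).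
  assert (HR : 0 < R0) by (apply Rinv_0_lt_compat; nra).
  assert (HKsR : K * s' * R0 = 1) by (unfold R0; field; nra).
  assert (HKsR' : K * s * R0 <= 1) by nra.
  apply (merge_families (iv_K2_ge1 inv) (iv_sym inv) (iv_qt inv) s s' c0 (S m)
    (annulus_family R0 s 0) (odd_family R0 s') Hs Hc0 Hscales)
    with (pinf := Q2) (A := fun x => exists i, annulus R0 (2 * i + 0) x)
         (B := fun x => heavy R0 x \/ exists i, annulus R0 (2 * i + 1) x).
  - intros M HM. apply diam_le_mono with (c * (2 * K) ^ 2 * s); [nra|].
    apply annulus_family_bounded with R0 0%nat; auto.
  - intros M [HM | ->].
    + apply diam_le_mono with (c * (2 * K) ^ 2 * s'); [nra|].
      apply annulus_family_bounded with R0 1%nat; auto; lra.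
    + apply diam_le_mono with (K / R0); [|apply heavy_diam; exact HR].
      unfold R0, Rdiv. rewrite Rinv_inv. nra.
  - apply annulus_family_multiplicity; auto.
  - apply odd_family_multiplicity; lra.
  - intros x hx. pose proof (heavy_or_parity_annulus R0 x HR hx). tauto.
  - intros M [i [b [_ ->]]] x [_ [_ [hx _]]]. exact hx.
  - intros M [[i [b [_ ->]]] | ->] x; [intros [_ [_ [hx _]]] | intros [hx _]]; exact hx.
  - intros x [i Hi]. apply annulus_family_covers with i; auto.
  - intros x [Hh | [i Hi]]; [exists (heavy R0); split; [right|]; auto|].
    destruct (annulus_family_covers R0 s' i 1 x) as [M [HM Mx]]; auto; [lra|].
    exists M. split; [left|]; auto.
Qed.

End Covers.

Theorem inversion_admissible (m : nat) :
  nagata_admissible rho Q1 m -> nagata_admissible sigma Q2 m.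
Proof.
  intros Hadm. destruct (admissible_cover_choice rho Q1 m Hadm) as [c [cover [Hc Hcover]]].
  pose proof K_ge1. pose proof (iv_K2_ge1 inv).
  set (c0 := Rmax (c * (2 * K) ^ 2) (K * K)).
  set (al := K2 * (K2 * (K2 * c0))).
  assert (Hal : 1 <= al).
  { assert (1 <= c0) by (eapply Rle_trans; [|apply Rmax_r]; nra).
    assert (1 <= K2 * c0) by nra. assert (1 <= K2 * (K2 * c0)) by nra. unfold al. nra. }
  exists (al * al). split; [nra|]. intros s Hs.
  destruct (two_scale_cover c m cover Hc Hcover c0 s (al * s) (Rmax_l _ _) (Rmax_r _ _) Hs)
    as [N [HN HNm]]; [right; unfold al; ring|].
  exists N. split; [|exact HNm]. eapply bounded_cover_mono; [|exact HN]. right. unfold al. ring.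
Qed.

End Annuli.

(** * Quasi-metrics and their involution *)

Lemma quasi_ptolemy_real (K p q r u v w : R) :
  1 <= K -> 0 <= p -> 0 <= q -> 0 <= r -> 0 <= u -> 0 <= v -> 0 <= w ->
  p <= K * Rmax q r -> p <= K * Rmax u v -> w <= K * Rmax q u -> w <= K * Rmax r v ->
  p * w <= K * K * Rmax (q * v) (r * u).
Proof.
  intros HK Hp Hq Hr Hu Hv Hw H1 H2 H3 H4.
  assert (Hpol : p * w <= K * K * (q * v) \/ p * w <= K * K * (r * u)).
  { unfold Rmax in *.
    destruct (Rle_dec q r); destruct (Rle_dec u v); destruct (Rle_dec q u); destruct (Rle_dec r v);
      try (left; nra); try (right; nra);
      destruct (Rle_dec w (K * v)); destruct (Rle_dec w (K * u)); first [left; nra | right; nra]. }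
  assert (q * v <= Rmax (q * v) (r * u)) by apply Rmax_l.
  assert (r * u <= Rmax (q * v) (r * u)) by apply Rmax_r.
  destruct Hpol; nra.
Qed.

Lemma Rinv_le_of_quasi (K p a u v : R) : 1 <= K -> 0 < u -> 0 < v -> 0 <= p ->
  p <= a * u * v -> v <= K * Rmax p u -> / u <= K * Rmax a (/ v).
Proof.
  intros HK Hu Hv Hp H1 H2. unfold Rmax in H2. destruct (Rle_dec p u).
  - apply Rle_trans with (K * / v); [|apply Rmult_le_compat_l; [lra | apply Rmax_r]].
    apply Rmult_le_reg_r with (u * v); [nra|].
    replace (/ u * (u * v)) with v by (field; lra).
    replace (K * / v * (u * v)) with (K * u) by (field; lra). lra.
  - apply Rle_trans with (K * a); [|apply Rmult_le_compat_l; [lra | apply Rmax_l]].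
    apply Rmult_le_reg_r with u; [lra|].
    replace (/ u * u) with 1 by (field; lra). nra.
Qed.

Lemma Rmax_inv_mult (u v : R) : 0 < u -> 0 < v -> Rmax (/ u) (/ v) * u * v = Rmax v u.
Proof.
  intros Hu Hv. destruct (Rle_lt_dec v u) as [H|H].
  - rewrite !Rmax_right by (try apply Rinv_le_contravar; lra). field; lra.
  - rewrite !Rmax_left by (try apply Rlt_le, Rinv_lt_contravar; nra). field; lra.
Qed.

Lemma rbar_max_Finite (a b : R) : rbar_max (Finite a) (Finite b) = Finite (Rmax a b).
Proof.
  unfold rbar_max, Rmax. destruct (Rle_dec a b).
  - rewrite dec_true; auto.
  - rewrite dec_false; auto.
Qed.

Section QuasiMetric.

Context {X : Type} {K : R} {d : X -> X -> Rbar} {pinf : option X}.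
Hypothesis Hq : is_quasi_metric K d pinf.

Lemma qm_K_ge1 : 1 <= K.
Proof. apply Hq. Qed.

Lemma qm_sym (x y : X) : d x y = d y x.
Proof. apply Hq. Qed.

Lemma qm_diag (x : X) : d x x = Finite 0.
Proof. apply Hq. reflexivity. Qed.

Lemma qm_finite (x y : X) : pinf <> Some x -> pinf <> Some y -> d x y = Finite (real (d x y)).
Proof.
  intros hx hy. destruct Hq as [_ [Hnn [_ [_ [_ Hinf]]]]].
  specialize (Hnn x y). destruct (d x y) eqn:E; simpl in Hnn; try contradiction; auto.
  apply Hinf in E. destruct E as [i [Ei [_ [<-|<-]]]]; contradiction.
Qed.

Lemma qm_real_sym (x y : X) : real (d x y) = real (d y x).
Proof. rewrite qm_sym. reflexivity. Qed.

Lemma qm_real_nonneg (x y : X) : pinf <> Some x -> pinf <> Some y -> 0 <= real (d x y).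
Proof.
  intros hx hy. destruct Hq as [_ [Hnn _]]. specialize (Hnn x y).
  rewrite (qm_finite x y hx hy) in Hnn. exact Hnn.
Qed.

Lemma qm_real_pos (x y : X) : pinf <> Some x -> pinf <> Some y -> x <> y -> 0 < real (d x y).
Proof.
  intros hx hy hxy. destruct (qm_real_nonneg x y hx hy) as [|E]; [assumption|].
  exfalso. apply hxy. apply Hq. rewrite (qm_finite x y hx hy), <- E. reflexivity.
Qed.

Lemma qm_quasi_triangle : quasi_triangle d K.
Proof.
  intros x y z a H1 H2. destruct Hq as [HK [Hnn [_ [_ [Hqt _]]]]].
  specialize (Hqt x y z). pose proof (Hnn x z) as N1. pose proof (Hnn z y) as N2.
  destruct (d x z) as [u| |]; simpl in H1, N1; try contradiction.
  destruct (d z y) as [v| |]; simpl in H2, N2; try contradiction.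
  rewrite rbar_max_Finite in Hqt.
  apply Rbar_le_weaken with (K * Rmax u v); [exact Hqt|].
  apply Rmult_le_compat_l; [lra|]. apply Rmax_lub; auto.
Qed.

Lemma qm_real_qt (x y z : X) : pinf <> Some x -> pinf <> Some y -> pinf <> Some z ->
  real (d x y) <= K * Rmax (real (d x z)) (real (d z y)).
Proof.
  intros hx hy hz.
  pose proof (qm_quasi_triangle x y z (Rmax (real (d x z)) (real (d z y)))) as H.
  rewrite (qm_finite x y hx hy), (qm_finite x z hx hz), (qm_finite z y hz hy) in H.
  apply H; simpl; [apply Rmax_l | apply Rmax_r].
Qed.

Lemma qm_ptolemy (x y z o : X) :
  pinf <> Some x -> pinf <> Some y -> pinf <> Some z -> pinf <> Some o ->
  real (d x y) * real (d z o) <=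
    K * K * Rmax (real (d x z) * real (d y o)) (real (d z y) * real (d x o)).
Proof.
  intros hx hy hz ho. apply quasi_ptolemy_real; try apply qm_K_ge1; try apply qm_real_nonneg; auto.
  - apply qm_real_qt; auto.
  - rewrite (qm_real_sym y o). apply qm_real_qt; auto.
  - rewrite (qm_real_sym x z). apply qm_real_qt; auto.
  - apply qm_real_qt; auto.
Qed.

End QuasiMetric.

Lemma qdiv_neq0 (a b : R) : b <> 0 -> qdiv a b = Finite (a / b).
Proof. intros H. unfold qdiv. destruct (Req_EM_T b 0); [contradiction | reflexivity]. Qed.

Lemma qdiv_0 (a : R) : qdiv a 0 = p_infty.
Proof. unfold qdiv. destruct (Req_EM_T 0 0); [reflexivity | lra]. Qed.

Section Involution.

Context {X : Type} {K : R} {d : X -> X -> Rbar} {pinf : option X} {o : X}.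
Hypothesis Hq : is_quasi_metric K d pinf.
Hypothesis Ho : pinf <> Some o.

Let io := involution d pinf o.

Lemma involution_diag (x : X) : io x x = Finite 0.
Proof. unfold io, involution. rewrite dec_true; auto. Qed.

Lemma dist_o_pos (x : X) : pinf <> Some x -> x <> o -> 0 < real (d x o).
Proof. intros hx hxo. apply (qm_real_pos Hq); auto. Qed.

Lemma involution_finite (x y : X) : x <> y ->
  pinf <> Some x -> pinf <> Some y -> x <> o -> y <> o ->
  io x y = Finite (real (d x y) / (real (d x o) * real (d y o))).
Proof.
  intros hxy hx hy hxo hyo. unfold io, involution.
  rewrite (dec_false (x = y)), (dec_false (pinf = Some x)), (dec_false (pinf = Some y)); auto.
  rewrite (qm_real_sym Hq o y). apply qdiv_neq0.
  pose proof (dist_o_pos x hx hxo). pose proof (dist_o_pos y hy hyo). nra.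
Qed.

Lemma involution_pinf_l (p y : X) : pinf = Some p -> pinf <> Some y -> y <> o ->
  io p y = Finite (/ real (d y o)).
Proof.
  intros Hp hy hyo. unfold io, involution.
  rewrite (dec_false (p = y)), (dec_true (pinf = Some p)) by congruence.
  rewrite (qm_real_sym Hq o y), qdiv_neq0 by (pose proof (dist_o_pos y hy hyo); lra).
  f_equal. field. pose proof (dist_o_pos y hy hyo). lra.
Qed.

Lemma involution_pinf_r (p y : X) : pinf = Some p -> pinf <> Some y -> y <> o ->
  io y p = Finite (/ real (d y o)).
Proof.
  intros Hp hy hyo. unfold io, involution.
  rewrite (dec_false (y = p)), (dec_false (pinf = Some y)), (dec_true (pinf = Some p))
    by congruence.
  rewrite qdiv_neq0 by (pose proof (dist_o_pos y hy hyo); lra).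
  f_equal. field. pose proof (dist_o_pos y hy hyo). lra.
Qed.

Lemma involution_o_r (x : X) : x <> o -> io x o = p_infty.
Proof.
  intros hx. unfold io, involution. rewrite (dec_false (x = o)), (qm_diag Hq o); auto.
  simpl. destruct (classic (pinf = Some x)) as [E|E].
  - rewrite (dec_true _ E). apply qdiv_0.
  - rewrite (dec_false _ E), (dec_false _ Ho), Rmult_0_r. apply qdiv_0.
Qed.

Lemma involution_o_l (x : X) : x <> o -> io o x = p_infty.
Proof.
  intros hx. unfold io, involution.
  rewrite (dec_false (o = x)), (dec_false _ Ho), (qm_diag Hq o); auto.
  simpl. destruct (classic (pinf = Some x)) as [E|E].
  - rewrite (dec_true _ E). apply qdiv_0.
  - rewrite (dec_false _ E), Rmult_0_l. apply qdiv_0.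
Qed.

Lemma involution_le_iff (x y : X) (a : R) :
  pinf <> Some x -> pinf <> Some y -> x <> o -> y <> o ->
  Rbar_le (io x y) (Finite a) <-> real (d x y) <= a * real (d x o) * real (d y o).
Proof.
  intros hx hy hxo hyo. pose proof (dist_o_pos x hx hxo). pose proof (dist_o_pos y hy hyo).
  destruct (classic (x = y)) as [<-|hxy].
  - rewrite involution_diag, (qm_diag Hq x). simpl.
    split; intros H'; [nra|].
    apply Rmult_le_reg_r with (real (d x o) * real (d x o)); nra.
  - rewrite involution_finite by auto. simpl.
    split; intros H'.
    + apply Rmult_le_reg_r with (/ (real (d x o) * real (d y o)));
        [apply Rinv_0_lt_compat; nra|].
      replace (a * real (d x o) * real (d y o) * / (real (d x o) * real (d y o))) with a
        by (field; lra). exact H'.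
    + apply Rmult_le_reg_r with (real (d x o) * real (d y o)); [nra|].
      replace (real (d x y) / (real (d x o) * real (d y o)) * (real (d x o) * real (d y o)))
        with (real (d x y)) by (field; lra). lra.
Qed.

Lemma involution_pinf_le_iff (p y : X) (a : R) : pinf = Some p -> pinf <> Some y -> y <> o ->
  Rbar_le (io p y) (Finite a) <-> 1 <= a * real (d y o).
Proof.
  intros Hp hy hyo. pose proof (dist_o_pos y hy hyo).
  rewrite involution_pinf_l with p y by auto. simpl. split; intros H'.
  - apply Rmult_le_compat_r with (r := real (d y o)) in H'; [|lra].
    rewrite Rinv_l in H'; lra.
  - apply Rmult_le_reg_r with (real (d y o)); [lra|]. rewrite Rinv_l; lra.
Qed.

Lemma involution_nonneg (x y : X) : Rbar_le (Finite 0) (io x y).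
Proof.
  destruct (classic (x = y)) as [<-|hxy]; [rewrite involution_diag; simpl; lra|].
  destruct (classic (x = o)) as [->|hxo]; [rewrite involution_o_l; simpl; auto|].
  destruct (classic (y = o)) as [->|hyo]; [rewrite involution_o_r; simpl; auto|].
  destruct (classic (pinf = Some x)) as [Px|hx].
  { rewrite involution_pinf_l with x y by congruence. simpl.
    apply Rlt_le, Rinv_0_lt_compat, dist_o_pos; congruence. }
  destruct (classic (pinf = Some y)) as [Py|hy].
  { rewrite involution_pinf_r with y x by congruence. simpl.
    apply Rlt_le, Rinv_0_lt_compat, dist_o_pos; congruence. }
  rewrite involution_finite by auto. simpl.
  pose proof (dist_o_pos x hx hxo). pose proof (dist_o_pos y hy hyo).
  pose proof (qm_real_nonneg Hq x y hx hy).
  apply Rmult_le_pos; auto. apply Rlt_le, Rinv_0_lt_compat. nra.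
Qed.

Lemma involution_sym (x y : X) : io x y = io y x.
Proof.
  destruct (classic (x = y)) as [<-|hxy]; auto.
  destruct (classic (x = o)) as [->|hxo]; [rewrite involution_o_l, involution_o_r; auto|].
  destruct (classic (y = o)) as [->|hyo]; [rewrite involution_o_l, involution_o_r; auto|].
  destruct (classic (pinf = Some x)) as [Px|hx].
  { rewrite involution_pinf_l with x y, involution_pinf_r with x y by congruence. reflexivity. }
  destruct (classic (pinf = Some y)) as [Py|hy].
  { rewrite involution_pinf_l with y x, involution_pinf_r with y x by congruence. reflexivity. }
  rewrite !involution_finite by auto. rewrite (qm_real_sym Hq x y).
  f_equal. f_equal. ring.
Qed.


Lemma involution_qt_finite (x y z : X) (a : R) :
  pinf <> Some x -> pinf <> Some y -> pinf <> Some z -> x <> o -> y <> o -> z <> o ->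
  Rbar_le (io x z) (Finite a) -> Rbar_le (io z y) (Finite a) ->
  Rbar_le (io x y) (Finite (K * K * a)).
Proof.
  intros hx hy hz hxo hyo hzo. rewrite !involution_le_iff by auto. intros H1 H2.
  pose proof (dist_o_pos x hx hxo). pose proof (dist_o_pos y hy hyo).
  pose proof (dist_o_pos z hz hzo). pose proof (qm_K_ge1 Hq).
  pose proof (qm_ptolemy Hq x y z o hx hy hz Ho) as Hpt.
  assert (Hmax : Rmax (real (d x z) * real (d y o)) (real (d z y) * real (d x o)) <=
                 a * real (d x o) * real (d y o) * real (d z o)).
  { apply Rmax_lub; nra. }
  apply Rmult_le_reg_r with (real (d z o)); [lra|]. nra.
Qed.

Lemma involution_qt_pinf_l (p y z : X) (a : R) :
  pinf = Some p -> pinf <> Some y -> pinf <> Some z -> y <> o -> z <> o ->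
  Rbar_le (io p z) (Finite a) -> Rbar_le (io z y) (Finite a) ->
  Rbar_le (io p y) (Finite (K * K * a)).
Proof.
  intros Hp hy hz hyo hzo.
  rewrite !involution_pinf_le_iff with (p := p), involution_le_iff by auto. intros H1 H2.
  pose proof (dist_o_pos y hy hyo). pose proof (dist_o_pos z hz hzo).
  pose proof (qm_K_ge1 Hq).
  pose proof (qm_real_qt Hq z o y hz Ho hy) as Hw.
  assert (0 < a) by nra.
  assert (1 <= K * a * real (d y o)).
  { unfold Rmax in Hw. destruct (Rle_dec (real (d z y)) (real (d y o))); [nra|].
    apply Rmult_le_reg_r with (real (d z o)); nra. }
  nra.
Qed.

Lemma involution_qt_pinf_m (p x y : X) (a : R) :
  pinf = Some p -> pinf <> Some x -> pinf <> Some y -> x <> o -> y <> o ->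
  Rbar_le (io x p) (Finite a) -> Rbar_le (io p y) (Finite a) ->
  Rbar_le (io x y) (Finite (K * K * a)).
Proof.
  intros Hp hx hy hxo hyo. rewrite involution_sym.
  rewrite !involution_pinf_le_iff with (p := p), involution_le_iff by auto. intros H1 H2.
  pose proof (dist_o_pos x hx hxo). pose proof (dist_o_pos y hy hyo).
  pose proof (qm_K_ge1 Hq).
  pose proof (qm_real_qt Hq x y o hx hy Ho) as Hp'.
  rewrite (qm_real_sym Hq o y) in Hp'.
  assert (0 <= a) by nra.
  assert (K * real (d y o) * 1 <= K * real (d y o) * (a * real (d x o)))
    by (apply Rmult_le_compat_l; nra).
  assert (K * real (d x o) * 1 <= K * real (d x o) * (a * real (d y o)))
    by (apply Rmult_le_compat_l; nra).
  assert (K * a * real (d x o) * real (d y o) <= K * K * a * real (d x o) * real (d y o)).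
  { do 3 (apply Rmult_le_compat_r; [lra|]). nra. }
  unfold Rmax in Hp'. destruct (Rle_dec (real (d x o)) (real (d y o))); nra.
Qed.

Lemma involution_quasi_triangle : quasi_triangle io (K * K).
Proof.
  intros x y z a H1 H2. pose proof (qm_K_ge1 Hq).
  pose proof (Rbar_le_Finite_nonneg _ _ (involution_nonneg x z) H1).
  assert (1 <= K * K) by nra. assert (Ha : a <= K * K * a) by nra.
  destruct (classic (x = z)) as [<-|hxz]; [apply Rbar_le_weaken with a; auto|].
  destruct (classic (z = y)) as [<-|hzy]; [apply Rbar_le_weaken with a; auto|].
  destruct (classic (x = y)) as [<-|hxy]; [rewrite involution_diag; simpl; nra|].
  destruct (classic (z = o)) as [->|hzo]; [rewrite involution_o_r in H1; auto; contradiction|].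
  destruct (classic (x = o)) as [->|hxo]; [rewrite involution_o_l in H1; auto; contradiction|].
  destruct (classic (y = o)) as [->|hyo]; [rewrite involution_o_r in H2; auto; contradiction|].
  destruct (classic (pinf = Some x)) as [Px|hx].
  { apply involution_qt_pinf_l with z; auto; congruence. }
  destruct (classic (pinf = Some y)) as [Py|hy].
  { rewrite involution_sym. rewrite involution_sym in H1, H2.
    apply involution_qt_pinf_l with z; auto; congruence. }
  destruct (classic (pinf = Some z)) as [Pz|hz].
  { apply involution_qt_pinf_m with z; auto. }
  apply involution_qt_finite with z; auto.
Qed.

Lemma involution_is_inversion :
  is_inversion d io pinf (Some o) (fun x => real (d x o)) K (K * K).
Proof.
  pose proof (qm_K_ge1 Hq) as HK.
  split.
  - exact HK.
  - nra.
  - exact involution_sym.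
  - exact involution_diag.
  - exact involution_quasi_triangle.
  - intros x hx hox. apply dist_o_pos; congruence.
  - intros x y hx hox hy hoy a.
    rewrite involution_le_iff, (qm_finite Hq x y) by congruence. reflexivity.
  - intros q x Hq' hx hox a. rewrite involution_pinf_r with q x by congruence. reflexivity.
  - intros x y hx _ hy _. rewrite (qm_finite Hq x y) by auto. simpl.
    rewrite (qm_real_sym Hq y o). apply (qm_real_qt Hq); auto.
  - intros x y hx _ hy _ a H. rewrite (qm_finite Hq x y) in H by auto. simpl in H.
    apply Rle_trans with (K * Rmax (real (d x y)) (real (d y o))).
    + apply (qm_real_qt Hq); auto.
    + apply Rmult_le_compat_l; [lra|]. apply Rmax_le_compat; lra.
Qed.

Lemma involution_is_inversion_back :
  is_inversion io d (Some o) pinf (fun x => / real (d x o)) K K.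
Proof.
  pose proof (qm_K_ge1 Hq) as HK.
  split; try exact HK.
  - exact (qm_sym Hq).
  - exact (qm_diag Hq).
  - exact (qm_quasi_triangle Hq).
  - intros x hox hx. apply Rinv_0_lt_compat, dist_o_pos; congruence.
  - intros x y hox hx hoy hy a.
    pose proof (dist_o_pos x hx ltac:(congruence)). pose proof (dist_o_pos y hy ltac:(congruence)).
    rewrite involution_le_iff, (qm_finite Hq x y) by congruence. simpl.
    replace (a * / real (d x o) * / real (d y o) * real (d x o) * real (d y o)) with a
      by (field; lra). reflexivity.
  - intros q x Eq hox hx a. injection Eq as <-.
    rewrite (qm_finite Hq x o), Rinv_inv by congruence. reflexivity.
  - intros x y hox hx hoy hy.
    pose proof (dist_o_pos x hx ltac:(congruence)). pose proof (dist_o_pos y hy ltac:(congruence)).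
    rewrite involution_le_iff by congruence.
    rewrite !Rmult_assoc, <- (Rmult_assoc (Rmax _ _)), Rmax_inv_mult by auto.
    rewrite (qm_real_sym Hq y o), Rmax_comm. apply (qm_real_qt Hq); auto.
  - intros x y hox hx hoy hy a H.
    pose proof (dist_o_pos x hx ltac:(congruence)). pose proof (dist_o_pos y hy ltac:(congruence)).
    rewrite involution_le_iff in H by congruence.
    apply (Rinv_le_of_quasi K (real (d x y))); auto.
    + apply (qm_real_nonneg Hq); auto.
    + rewrite (qm_real_sym Hq x y). apply (qm_real_qt Hq); auto.
Qed.

End Involution.

Theorem proposition3p2 (X : Type) (K : R) (d : X -> X -> Rbar)
  (pinf : option X) (o : X) :
  is_quasi_metric K d pinf -> pinf <> Some o ->
  nagata_dim d pinf = nagata_dim (involution d pinf o) (Some o).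
Proof.
  intros Hq Ho. unfold nagata_dim. apply Glb_Rbar_eqset.
  intros r. split; intros [n [-> Hadm]]; exists n; split; auto.
  - exact (inversion_admissible (involution_is_inversion Hq Ho) n Hadm).
  - exact (inversion_admissible (involution_is_inversion_back Hq Ho) n Hadm).
Qed.
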